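(* Let $(N,\underline X)\in\aleph^{FGM*}$ with $E[X]<\infty$. For every $n\in A_N$, $$E[X_1\mid N=n]=\sum_{(i_0,i_1)\in\{0,1\}^2}f_{I_0,I_1}(i_0,i_1)\frac{\gamma_{N_{[1+i_0]}}(n)}{\gamma_N(n)}\mu_{X_{[1+i_1]}}=E[X]+\frac{\theta_{01}}{4}\frac{\gamma_{N_{[2]}}(n)-\gamma_{N_{[1]}}(n)}{\gamma_N(n)}\big(\mu_{X_{[2]}}-\mu_{X_{[1]}}\big),$$ where $f_{I_0,I_1}(i_0,i_1)=\tfrac14\big(1+(-1)^{i_0+i_1}\theta_{01}\big)$.
   Context: Collective risk model (CRM): $N$ is a random variable with values in $\mathbb{N}_0$, cdf $F_N$, pmf $\gamma_N(n)=\Pr(N=n)$ and support $A_N=\{n:\gamma_N(n)>0\}$; $\underline X=\{X_j\}_{j\ge1}$ is a sequence of identically distributed strictly positive random variables with common cdf $F_X$ (generic copy $X$). A $d$-variate FGM copula with parameters $\theta_{j_1\dots j_k}$ is $C(u_1,\dots,u_d)=\prod_{m=1}^d u_m\big(1+\sum_{k=2}^d\sum_{j_1<\dots<j_k}\theta_{j_1\dots j_k}\bar u_{j_1}\cdots\bar u_{j_k}\big)$, $\bar u=1-u$, with parameters such that $1+\sum_{k}\sum_{j_1<\dots<j_k}\theta_{j_1\dots j_k}\varepsilon_{j_1}\cdots\varepsilon_{j_k}\ge0$ for all $\varepsilon\in\{-1,1\}^d$. A CRM belongs to $\aleph^{FGM}$ if for every $k\in\mathbb{N}_1$, $k\le\sup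 A_N$, $F_{N,X_1,\dots,X_k}(n,x_1,\dots,x_k)=C_k(F_N(n),F_X(x_1),\dots,F_X(x_k))$ for a $(k+1)$-variate FGM copula $C_k$ with coordinates indexed $0,\dots,k$ (index $0$ for $N$). It belongs to $\aleph^{FGM*}$ if in addition $(N,X_1,\dots,X_k)\overset d=(N,X_{\pi(1)},\dots,X_{\pi(k)})$ for all such $k$ and all permutations $\pi$; then $\theta_{0j}=\theta_{01}$, $\theta_{ij}=\theta_{12}$, $\theta_{0ij}=\theta_{012}$ for all $1\le i<j$. For a random variable $Y$, $Y_{[1]}$, $Y_{[2]}$ denote the minimum and maximum of two iid copies of $Y$, $\mu_{Y_{[j]}}=E[Y_{[j]}]$, and $\gamma_{N_{[j]}}(n)=\Pr(N_{[j]}=n)$. *)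

From HB Require Import structures.
From mathcomp Require Import all_boot all_order all_algebra all_fingroup.
From mathcomp Require Import all_classical all_reals all_analysis.
Set Implicit Arguments. Unset Strict Implicit. Unset Printing Implicit Defensive.
Import Order.TTheory GRing.Theory Num.Theory.
Local Open Scope classical_set_scope.
Local Open Scope ring_scope.

Section Defs.
Context {R : realType}.

(** d-variate FGM copula with parameters theta S indexed by the subsets
    S = {j_1 < ... < j_k} of the coordinates with k >= 2
    (values of theta on subsets of size < 2 are irrelevant). *)
Definition fgm_copula (d : nat) (theta : {set 'I_d} -> R) (u : 'I_d -> R) : R :=
  (\prod_(m < d) u m) *
  (1 + \sum_(S : {set 'I_d} | (1 < #|S|)%N) theta S * \prod_(j in S) (1 - u j)).

Definition fgm_admissible (d : nat) (theta : {set 'I_d} -> R) : Prop :=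
  forall eps : 'I_d -> bool,
    0 <= 1 + \sum_(S : {set 'I_d} | (1 < #|S|)%N)
              theta S * \prod_(j in S) (if eps j then 1 else -1).

Context {dT : measure_display} {T : measurableType dT} (P : probability T R).

Definition cdfR (Y : {RV P >-> R}) (y : R) : R :=
  fine (P [set w | Y w <= y]).

Definition pmfN (N : {RV P >-> R}) (n : nat) : R :=
  fine (P [set w | N w = n%:R]).

(** joint cdf of (N, X_1, ..., X_k); the random variable X_{i+1} is X i *)
Definition joint_cdf (N : {RV P >-> R}) (X : nat -> {RV P >-> R}) (k : nat)
    (y : R) (x : 'I_k -> R) : \bar R :=
  P [set w | N w <= y /\ forall i : 'I_k, X i w <= x i].

Definition joint_cdf_perm (N : {RV P >-> R}) (X : nat -> {RV P >-> R}) (k : nat)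
    (s : 'S_k) (y : R) (x : 'I_k -> R) : \bar R :=
  P [set w | N w <= y /\ forall i : 'I_k, X (s i) w <= x i].

Definition condexp_eq (Y N : {RV P >-> R}) (n : nat) : R :=
  fine (\int[P]_(w in [set w | N w = n%:R]) (Y w)%:E) / pmfN N n.

End Defs.

Definition ostat2 {R : realType} (j : nat) (a b : R) : R :=
  if j == 1%N then Num.min a b else Num.max a b.

Section OrderStats.
Context {R : realType} {dT : measure_display} {T : measurableType dT}
  (P : probability T R).
Local Open Scope ereal_scope.

(** gamma_{N_[j]}(n) = Pr(N_[j] = n), where N_[1], N_[2] are the minimum and
    maximum of two iid copies of N (realized on the product of two copies of
    the law of N) *)
Definition pmf_ostat (N : {RV P >-> R}) (j : nat) (n : nat) : R :=
  fine ((distribution P N \x distribution P N)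
          [set z : R * R | ostat2 j z.1 z.2 = n%:R]).

Definition mean_ostat (Y : {RV P >-> R}) (j : nat) : R :=
  fine (\int[distribution P Y \x distribution P Y]_z (ostat2 j z.1 z.2)%:E).

End OrderStats.

Arguments cdfR {R dT T} P Y y.
Arguments pmfN {R dT T} P N n.
Arguments joint_cdf {R dT T} P N X {k} y x.
Arguments joint_cdf_perm {R dT T} P N X {k} s y x.
Arguments condexp_eq {R dT T} P Y N n.
Arguments pmf_ostat {R dT T} P N j n.
Arguments mean_ostat {R dT T} P Y j.

From HB Require Import structures.
From mathcomp Require Import all_boot all_order all_algebra all_fingroup.
From mathcomp Require Import all_classical all_reals all_analysis.
From mathcomp Require Import measurable_realfun ring lra.
Import Order.TTheory GRing.Theory Num.Theory.
Set Implicit Arguments. Unset Strict Implicit. Unset Printing Implicit Defensive.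
Local Open Scope classical_set_scope.
Local Open Scope ring_scope.

(* Let a = F_N(n), b = F_N(n - 1) and F = F_X.  The bivariate FGM copula of
   (N, X_1) gives P(N = n, X <= r) = (a - b) F(r) + th c F(r) (1 - F(r)) with
   c = a (1 - a) - b (1 - b), so by the layer-cake formula restricted to {N = n},
   E[X 1_{N = n}] = (a - b) E[X] - th c G where G = \int_0^oo F (1 - F).
   For two iid copies, P(max > r) = 1 - F^2 = (1 - F) + F (1 - F) and
   P(min > r) = (1 - F)^2 = (1 - F) - F (1 - F), whence mu_{X[2]} - mu_{X[1]} = 2 G,
   while gamma_{N[2]}(n) - gamma_{N[1]}(n) = (a^2 - b^2) - ((1 - b)^2 - (1 - a)^2) = -2 c.
   Both right-hand sides of the theorem thus equal E[X] - th c G / (a - b). *)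

Lemma card_gt1_setI2 (S : {set 'I_2}) : (1 < #|S|)%N = (S == [set: 'I_2]%SET).
Proof.
rewrite eqEcard finset.subsetT /= cardsT card_ord.
by have := max_card (pred_of_set S); rewrite card_ord; case: #|S| => [|[|[|]]].
Qed.

Lemma fgm_copula2E (R : realType) (th : {set 'I_2} -> R) (u : 'I_2 -> R) :
  fgm_copula th u = u ord0 * u ord_max *
    (1 + th [set ord0; ord_max]%SET * ((1 - u ord0) * (1 - u ord_max))).
Proof.
have I2E : [set ord0; ord_max]%SET = [set: 'I_2]%SET.
  by apply/setP => i; rewrite !inE; case: i => [[|[|//]] ?].
rewrite /fgm_copula (eq_bigl (pred1 [set ord0; ord_max]%SET)); last first.
  by move=> S; rewrite card_gt1_setI2 I2E.
rewrite big_pred1_eq big_setU1 ?inE //= big_set1 big_ord_recr /= big_ord1.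
by congr (u _ * _ * _); apply/val_inj.
Qed.

Section RealSets.
Context (R : realType).

Lemma natr_le_subr1 (m n : nat) : (m%:R <= n%:R - 1 :> R) = (m < n)%N.
Proof. by rewrite lerBrDr natr1 ler_nat. Qed.

Lemma max_eq_iff (x y c : R) :
  Num.max x y = c <-> (x <= c /\ y <= c) /\ ~ (x < c /\ y < c).
Proof. by rewrite maxEle; case: ifP => h; split; lra. Qed.

Lemma min_eq_iff (x y c : R) :
  Num.min x y = c <-> (c <= x /\ c <= y) /\ ~ (c < x /\ c < y).
Proof. by rewrite minEle; case: ifP => h; split; lra. Qed.

Lemma measurable_le (r : R) : measurable [set x : R | x <= r].
Proof.
have -> : [set x : R | x <= r] = `]-oo, r]%classic by apply/seteqP; split => x /=; rewrite in_itv.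
exact: measurable_itv.
Qed.

Lemma measurable_lt (r : R) : measurable [set x : R | x < r].
Proof.
have -> : [set x : R | x < r] = `]-oo, r[%classic by apply/seteqP; split => x /=; rewrite in_itv.
exact: measurable_itv.
Qed.

Lemma measurable_gt (r : R) : measurable [set x : R | r < x].
Proof.
have -> : [set x : R | r < x] = `]r, +oo[%classic.
  by apply/seteqP; split => x /=; rewrite in_itv /= andbT.
exact: measurable_itv.
Qed.

Lemma measurable_ge (r : R) : measurable [set x : R | r <= x].
Proof.
have -> : [set x : R | r <= x] = `[r, +oo[%classic.
  by apply/seteqP; split => x /=; rewrite in_itv /= andbT.
exact: measurable_itv.
Qed.

End RealSets.

Section ProbabilityFacts.
Context (R : realType) (dT : measure_display) (T : measurableType dT)
  (P : probability T R).
Local Notation pr A := (fine (P A)).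

Lemma measurable_rv_le (Y : {RV P >-> R}) (r : R) : measurable [set w | Y w <= r].
Proof.
have -> : [set w | Y w <= r] = Y @^-1` `]-oo, r] by apply/seteqP; split => w /=; rewrite in_itv.
exact: measurable_funPTI.
Qed.

Lemma measurable_rv_eq (Y : {RV P >-> R}) (r : R) : measurable [set w | Y w = r].
Proof. exact: (measurable_funPTI Y (measurable_set1 r)). Qed.

Lemma EFin_pr (A : set T) : measurable A -> (pr A)%:E = P A.
Proof. by move=> mA; rewrite fineK// fin_num_measure. Qed.

Lemma cdfR_ge0 (Y : {RV P >-> R}) (r : R) : 0 <= cdfR P Y r.
Proof. exact: fine_ge0. Qed.

Lemma cdfR_le1 (Y : {RV P >-> R}) (r : R) : cdfR P Y r <= 1.
Proof.
by have mY := measurable_rv_le Y r; rewrite -lee_fin /cdfR EFin_pr // probability_le1.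
Qed.

Lemma ccdf_cdfR (Y : {RV P >-> R}) (r : R) : ccdf Y r = (1 - cdfR P Y r)%:E.
Proof.
rewrite /ccdf /distribution /pushforward.
have -> : Y @^-1` `]r, +oo[ = ~` [set w | Y w <= r].
  by apply/seteqP; split => w /=; rewrite in_itv /= andbT ltNge => /negP.
by have mY := measurable_rv_le Y r; rewrite probability_setC // EFinB /cdfR EFin_pr.
Qed.

Lemma measurable_ccdfR (Y : {RV P >-> R}) : measurable_fun setT (fun r => 1 - cdfR P Y r).
Proof.
have -> : (fun r => 1 - cdfR P Y r) = fine \o ccdf Y by apply/funext => r /=; rewrite ccdf_cdfR.
exact: measurableT_comp (fine_measurable measurableT) (ccdf_measurable Y).
Qed.

Lemma distribution_le (Y : {RV P >-> R}) (r : R) :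
  distribution P Y [set x | x <= r] = (cdfR P Y r)%:E.
Proof. exact: esym (EFin_pr (measurable_rv_le Y r)). Qed.

Lemma distribution_gt (Y : {RV P >-> R}) (r : R) :
  distribution P Y [set x | r < x] = (1 - cdfR P Y r)%:E.
Proof.
have -> : [set x | r < x] = ~` [set x : R | x <= r].
  by apply/seteqP; split => x /=; rewrite ltNge => /negP.
rewrite probability_setC; last exact: measurable_le.
transitivity (1 - distribution P Y [set x | x <= r]%R)%E; first by [].
by rewrite distribution_le EFinB.
Qed.

Lemma pr_setU (A B : set T) : measurable A -> measurable B -> A `&` B = set0 ->
  pr (A `|` B) = pr A + pr B.
Proof. by move=> mA mB AB0; rewrite measureU // fineD // fin_num_measure. Qed.

Lemma pr_setI_trivial (A C : set T) : measurable A -> measurable C ->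
  P A = 0%E \/ P A = 1%E -> pr (A `&` C) = pr A * pr C.
Proof.
move=> mA mC [PA0|PA1].
  have -> : P (A `&` C) = 0%E.
    by apply/eqP; rewrite eq_le measure_ge0 andbT -PA0 le_measure ?inE //; exact: measurableI.
  by rewrite PA0 mul0r.
have PnA : P (~` A) = 0%E by rewrite probability_setC // PA1 subee.
have PCA : P (C `\` A) = 0%E.
  apply/eqP; rewrite eq_le measure_ge0 andbT -PnA.
  by rewrite le_measure ?inE //; [exact: measurableD | exact: measurableC].
rewrite PA1 mul1r [P C](measureDI P mC mA) setIC.
rewrite [X in (X + _)%E](_ : _ = 0%E) ?add0e //; exact: PCA.
Qed.

Lemma integral_set_ccdf (X : {RV P >-> R}) (D : set T) : measurable D ->
  (forall w, 0 <= X w) ->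
  (\int[P]_(w in D) (X w)%:E =
   \int[lebesgue_measure]_(r in `[0%R, +oo[) (pr D - pr (D `&` [set w | X w <= r]))%:E)%E.
Proof.
move=> mD X0.
have [Y YE] : exists Y : {RV P >-> R}, forall w, Y w = if w \in D then X w else 0.
  exists (X * indic_mfun D mD)%R => w.
  by rewrite mfunM /= /indic_mfun mindicE; case: (w \in D); rewrite ?mulr1 ?mulr0.
have -> : (\int[P]_(w in D) (X w)%:E)%E = ('E_P[Y])%E.
  rewrite expectation_def integral_mkcond.
  by apply: eq_integral => w _; rewrite /patch YE; case: ifP.
rewrite ge0_expectation_ccdf; last by move=> w; rewrite YE; case: ifP.
apply: eq_integral => r; rewrite inE /= in_itv /= andbT => r0.
have mXr := measurable_rv_le X r.
have mDr := measurableI _ _ mD mXr.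
have -> : ccdf Y r = P (D `\` [set w | X w <= r]).
  congr (P _); apply/seteqP; split => w /=; rewrite in_itv /= andbT YE.
    by case: ifPn => [/set_mem wD|_]; [rewrite ltNge => /negP | rewrite ltNge r0].
  by case=> /mem_set -> /negP; rewrite -ltNge.
rewrite measureD //; last by rewrite -ge0_fin_numE ?fin_num_measure.
by rewrite EFinB !EFin_pr.
Qed.

Lemma expectation_ccdf (X : {RV P >-> R}) : (forall w, 0 <= X w) ->
  ('E_P[X])%E = (\int[lebesgue_measure]_(r in `[0%R, +oo[) (1 - cdfR P X r)%:E)%E.
Proof.
by move=> X0; rewrite ge0_expectation_ccdf //; apply: eq_integral => r _; rewrite ccdf_cdfR.
Qed.

Lemma integrable_ccdf (X : {RV P >-> R}) : (forall w, 0 <= X w) ->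
  P.-integrable setT (EFin \o X) ->
  lebesgue_measure.-integrable `[0%R, +oo[ (fun r => (1 - cdfR P X r)%:E).
Proof.
move=> X0 iX; apply/integrableP; split.
  apply/measurable_EFinP.
  exact: measurable_funS measurableT (@subsetT _ _) (measurable_ccdfR X).
under eq_integral => r _ do rewrite /= ger0_norm ?subr_ge0 ?cdfR_le1 //.
by rewrite -expectation_ccdf // expectation_def (integrable_lty measurableT iX).
Qed.

End ProbabilityFacts.

Lemma integral_lincomb (R : realType) (d : measure_display) (U : measurableType d)
    (mu : {measure set U -> \bar R}) (D : set U) (f g : U -> R) (a b : R) :
  measurable D ->
  mu.-integrable D (EFin \o f) -> mu.-integrable D (EFin \o g) ->
  (\int[mu]_(x in D) (a * f x + b * g x)%:E =
   (a * fine (\int[mu]_(x in D) (f x)%:E) + b * fine (\int[mu]_(x in D) (g x)%:E))%:E)%E.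
Proof.
move=> mD fi gi.
have scale (h : U -> R) (c : R) : mu.-integrable D (EFin \o h) ->
    mu.-integrable D (EFin \o (fun x => c * h x)) /\
    (\int[mu]_(x in D) (c * h x)%:E = (c * fine (\int[mu]_(x in D) (h x)%:E))%:E)%E.
  move=> hi; split.
    by apply: eq_integrable mD _ _ _ (integrableZl mD c hi) => x _ /=; rewrite EFinM.
  under eq_integral do rewrite EFinM.
  by rewrite (integralZl mD hi) EFinM fineK // (integrable_fin_num mD hi).
have [afi af] := scale f a fi; have [bgi bg] := scale g b gi.
under eq_integral do rewrite EFinD.
by rewrite (integralD_EFin mD afi bgi) /= af bg.
Qed.

(* Half of Gini's mean difference E|Y - Y'|: for two iid copies of a positive Y,
   the means of the maximum and of the minimum are E[Y] +- gini_half Y. *)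
Definition gini_half (R : realType) (dT : measure_display) (T : measurableType dT)
    (P : probability T R) (Y : {RV P >-> R}) : R :=
  fine (\int[lebesgue_measure]_(r in `[0%R, +oo[) (cdfR P Y r * (1 - cdfR P Y r))%:E)%E.

Section OrderStatistics.
Context (R : realType) (dT : measure_display) (T : measurableType dT)
  (P : probability T R) (X : {RV P >-> R}).
Hypothesis X_gt0 : forall w, 0 < X w.
Local Notation F := (cdfR P X).
Local Notation mu := (distribution P X).
Local Notation Q := (mu \x mu)%E.

Lemma distribution_le0 : mu [set x | x <= 0] = 0%E.
Proof.
rewrite /distribution /pushforward.
have -> : X @^-1` [set x | x <= 0] = set0.
  by apply/seteqP; split => w //=; rewrite leNgt X_gt0.
exact: measure0.
Qed.

Lemma distribution_pairX (A B : set R) : measurable A -> measurable B ->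
  Q (A `*` B) = (mu A * mu B)%E.
Proof. exact: product_measure1E. Qed.

(* The law of X lives on (0, +oo), so h agrees Q-a.e. with its positive part,
   to which the layer-cake formula for nonnegative random variables applies. *)
Lemma integral_pair_ccdf (h : R * R -> R) : measurable_fun setT h ->
  (forall z, 0 < z.1 -> 0 < z.2 -> 0 <= h z) ->
  (\int[Q]_z (h z)%:E = \int[lebesgue_measure]_(r in `[0%R, +oo[) Q [set z | r < h z]%R)%E.
Proof.
move=> mh h_ge0.
have mh0 : measurable_fun setT (fun z => Num.max (h z) 0).
  exact: measurable_maxr mh (measurable_cst _).
have [H HE] : exists H : {RV Q >-> R}, forall z, H z = Num.max (h z) 0.
  by exists (mfun_Sub (mem_set mh0)).
have -> : (\int[Q]_z (h z)%:E = 'E_Q[H])%E.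
  rewrite expectation_def.
  apply: (ae_eq_integral (fun w => (H w)%:E) (fun z => (h z)%:E) measurableT).
  - exact/measurable_EFinP.
  - exact/measurable_EFinP.
  exists (([set x | x <= 0] `*` setT) `|` (setT `*` [set x | x <= 0])); split.
  - by apply: measurableU; apply: measurableX => //; exact: measurable_le.
  - apply/eqP; rewrite eq_le measure_ge0 andbT.
    apply: le_trans (measureU2 _ _ _) _; try by apply: measurableX => //; exact: measurable_le.
    change (Q ([set x | x <= 0]%R `*` setT) + Q (setT `*` [set x | x <= 0]%R) <= 0)%E.
    rewrite !distribution_pairX //; try exact: measurable_le.
    by rewrite distribution_le0 mul0e mule0 adde0.
  - move=> z /= hz; apply: contrapT => z_pos; apply: hz => _; congr EFin.
    rewrite HE; apply/esym/max_idPl/h_ge0; rewrite ltNge; apply/negP => ?.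
      by apply: z_pos; left.
    by apply: z_pos; right.
rewrite ge0_expectation_ccdf; last by move=> z; rewrite HE le_max lexx orbT.
apply: eq_integral => r; rewrite inE /= in_itv /= andbT => r0.
rewrite /ccdf /distribution /pushforward; congr (Q _); apply/seteqP.
by split => z /=; rewrite in_itv /= andbT HE lt_max [r < 0]ltNge r0 orbF.
Qed.

Lemma pr_max_gt (r : R) : Q [set z | r < Num.max z.1 z.2] = (1 - F r ^+ 2)%:E.
Proof.
have -> : [set z | r < Num.max z.1 z.2] = ~` ([set x | x <= r] `*` [set x | x <= r]).
  apply/seteqP; split => z /=; rewrite lt_max !ltNge -negb_and.
    by move=> /negP h [h1 h2]; apply: h; rewrite h1 h2.
  by move=> h; apply/negP => /andP.
rewrite probability_setC; last by apply: measurableX; exact: measurable_le.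
transitivity (1 - Q ([set x | x <= r] `*` [set x | x <= r])%R)%E; first by [].
rewrite distribution_pairX; try exact: measurable_le.
by rewrite [mu _]distribution_le -EFinM -EFinB expr2.
Qed.

Lemma pr_min_gt (r : R) : Q [set z | r < Num.min z.1 z.2] = ((1 - F r) ^+ 2)%:E.
Proof.
have -> : [set z | r < Num.min z.1 z.2] = [set x | r < x] `*` [set x | r < x].
  by apply/seteqP; split => z /=; rewrite lt_min => /andP.
rewrite distribution_pairX; try exact: measurable_gt.
by rewrite [mu _]distribution_gt -EFinM expr2.
Qed.

Lemma pr_pair_square_setD (A B : set R) : measurable A -> measurable B -> B `<=` A ->
  fine (Q ((A `*` A) `\` (B `*` B))) = fine (mu A) ^+ 2 - fine (mu B) ^+ 2.
Proof.
move=> mA mB BA; have mAA : measurable (A `*` A) by exact: measurableX.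
have mBB : measurable (B `*` B) by exact: measurableX.
rewrite measureD //; last first.
  by change (Q (A `*` A) < +oo)%E; exact: le_lt_trans (probability_le1 _ mAA) (ltry 1).
rewrite setIidr; last by move=> z [/BA ? /BA ?].
change (fine (Q (A `*` A) - Q (B `*` B)) = fine (mu A) ^+ 2 - fine (mu B) ^+ 2).
rewrite !distribution_pairX // -(EFin_pr _ mA) -(EFin_pr _ mB).
by rewrite -!EFinM -EFinB !expr2.
Qed.

Hypothesis X_int : P.-integrable setT (EFin \o X).

Lemma integrable_cdf_ccdf :
  lebesgue_measure.-integrable `[0%R, +oo[ (fun r => (F r * (1 - F r))%:E).
Proof.
have X_ge0 w : 0 <= X w by exact/ltW.
apply: le_integrable (integrable_ccdf X_ge0 X_int) => //.
  apply/measurable_EFinP/(measurable_funS measurableT (@subsetT _ _)).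
  have -> : (fun r => F r * (1 - F r)) = (fun r => (1 - (1 - F r)) * (1 - F r)).
    by apply/funext => r; rewrite subKr.
  have mG := measurable_ccdfR X.
  by apply: measurable_funM => //; apply: measurable_funB => //; exact: measurable_cst.
move=> r _ /=; rewrite !ger0_norm ?lee_fin ?mulr_ge0 ?subr_ge0 ?cdfR_ge0 ?cdfR_le1 //.
by rewrite ler_piMl ?subr_ge0 ?cdfR_le1 ?cdfR_ge0.
Qed.

Lemma integral_ccdf_gini (a b : R) :
  (\int[lebesgue_measure]_(r in `[0%R, +oo[) (a * (1 - F r) + b * (F r * (1 - F r)))%:E
   = (a * fine 'E_P[X] + b * gini_half X)%:E)%E.
Proof.
have X_ge0 w : 0 <= X w by exact/ltW.
rewrite integral_lincomb //; first by rewrite expectation_ccdf.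
  exact: integrable_ccdf.
exact: integrable_cdf_ccdf.
Qed.

Lemma mean_ostat_max : mean_ostat P X 2 = fine 'E_P[X] + gini_half X.
Proof.
rewrite /mean_ostat /ostat2 /= integral_pair_ccdf; first last.
- by move=> z z1 _; rewrite le_max ltW.
- exact: (measurable_maxr (f := fst) (g := snd)).
transitivity (fine (\int[lebesgue_measure]_(r in `[0%R, +oo[)
    (1 * (1 - F r) + 1 * (F r * (1 - F r)))%:E)%E).
  by congr fine; apply: eq_integral => r _; rewrite pr_max_gt; congr EFin; ring.
by rewrite integral_ccdf_gini !mul1r.
Qed.

Lemma mean_ostat_min : mean_ostat P X 1 = fine 'E_P[X] - gini_half X.
Proof.
rewrite /mean_ostat /ostat2 /= integral_pair_ccdf; first last.
- by move=> z z1 z2; rewrite le_min !ltW.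
- exact: (measurable_minr (f := fst) (g := snd)).
transitivity (fine (\int[lebesgue_measure]_(r in `[0%R, +oo[)
    (1 * (1 - F r) + (-1) * (F r * (1 - F r)))%:E)%E).
  by congr fine; apply: eq_integral => r _; rewrite pr_min_gt; congr EFin; ring.
by rewrite integral_ccdf_gini mul1r mulN1r.
Qed.

End OrderStatistics.

Definition fgm_bivariate (R : realType) (dT : measure_display) (T : measurableType dT)
    (P : probability T R) (N Y : {RV P >-> R}) (th : R) : Prop :=
  forall y r, fine (P ([set w | N w <= y] `&` [set w | Y w <= r])) =
    cdfR P N y * cdfR P Y r * (1 + th * ((1 - cdfR P N y) * (1 - cdfR P Y r))).

(* Used when N = 0 a.s.: then no copula hypothesis is available, but every
   event {N <= y} is trivial, so the joint cdf factorises and any parameter fits. *)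
Lemma fgm_bivariate_trivial (R : realType) (dT : measure_display)
    (T : measurableType dT) (P : probability T R) (N Y : {RV P >-> R}) (th : R) :
  (forall y, P [set w | N w <= y] = 0%E \/ P [set w | N w <= y] = 1%E) ->
  fgm_bivariate N Y th.
Proof.
move=> triv y r; have mN := measurable_rv_le N y; have mY := measurable_rv_le Y r.
by rewrite pr_setI_trivial // /cdfR; case: (triv y) => -> /=; ring.
Qed.

Lemma fgm_bivariate_joint_cdf (R : realType) (dT : measure_display)
    (T : measurableType dT) (P : probability T R) (N : {RV P >-> R})
    (X : nat -> {RV P >-> R}) (th : {set 'I_2} -> R) :
  (forall y (x : 'I_1 -> R), joint_cdf P N X y x =
     (fgm_copula th (fun i : 'I_2 => if unlift ord0 i is Some i'
                                     then cdfR P (X 0%N) (x i') else cdfR P N y))%:E) ->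
  fgm_bivariate N (X 0%N) (th [set ord0; ord_max]%SET).
Proof.
move=> joint y r; have := joint y (fun _ => r); rewrite /joint_cdf.
have -> : [set w | N w <= y /\ forall i : 'I_1, X i w <= r] =
    [set w | N w <= y] `&` [set w | X 0%N w <= r].
  apply/seteqP; split => w /= [Nw Xw]; split => //; first exact: Xw ord0.
  by move=> i; rewrite (ord1 i).
move=> ->; rewrite fgm_copula2E /= unlift_none.
by case: unliftP => [j _ | /(congr1 val) //].
Qed.

Section IntegerValued.
Context (R : realType) (dT : measure_display) (T : measurableType dT)
  (P : probability T R) (N : {RV P >-> R}).
Hypothesis N_nat : forall w, exists m : nat, N w = m%:R.
Local Notation pr A := (fine (P A)).

Lemma pr_le_nat_split (n : nat) (C : set T) : measurable C ->
  pr ([set w | N w <= n%:R] `&` C) =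
  pr ([set w | N w <= n%:R - 1] `&` C) + pr ([set w | N w = n%:R] `&` C).
Proof.
move=> mC; rewrite -pr_setU; first last.
- apply/seteqP; split => // w /= [[h1 _] [h2 _]].
  by move: h1; rewrite h2 natr_le_subr1 ltnn.
- exact: measurableI (measurable_rv_eq _ _) mC.
- exact: measurableI (measurable_rv_le _ _) mC.
congr (fine (P _)); apply/seteqP; split => w /=; have [m Nm] := N_nat w; rewrite Nm.
  case; rewrite ler_nat leq_eqVlt => /orP[/eqP -> | mn] Cw; first by right.
  by left; rewrite natr_le_subr1.
case=> [[+ Cw] | [+ Cw]]; last by move=> /eqP; rewrite eqr_nat => /eqP ->.
by rewrite natr_le_subr1 ler_nat => /ltnW.
Qed.

Lemma pmfN_cdfR (n : nat) : pmfN P N n = cdfR P N n%:R - cdfR P N (n%:R - 1).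
Proof.
by have := pr_le_nat_split n measurableT; rewrite !setIT /cdfR => ->; rewrite addrC addKr.
Qed.

Lemma pr_le_trivial_of_pmfN0 : (forall m, (0 < m)%N -> pmfN P N m = 0) ->
  forall y, P [set w | N w <= y] = 0%E \/ P [set w | N w <= y] = 1%E.
Proof.
move=> pmf0 y.
have N0_null : P (~` [set w | N w = 0]) = 0%E.
  apply/eqP; rewrite eq_le measure_ge0 andbT.
  have := @measure_sigma_subadditive _ _ _ P (~` [set w | N w = 0])
    (fun m => [set w | N w = m.+1%:R]) (fun m => measurable_rv_eq N _)
    (measurableC (measurable_rv_eq N _)).
  move=> /(_ _) cover; apply: le_trans (cover _) _.
    by move=> w /= Nw; have [[|m] Nm] := N_nat w; [by case: Nw; rewrite Nm | exists m].
  rewrite eseries0 // => m _ _ /=.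
  by rewrite -(EFin_pr P (measurable_rv_eq N _)) -/(pmfN P N m.+1) pmf0.
have mle := measurable_rv_le N y.
have [y_ge0|y_lt0] := leP 0 y; [right|left].
  have nle_null : P (~` [set w | N w <= y]) = 0%E.
    apply/eqP; rewrite eq_le measure_ge0 andbT -N0_null le_measure ?inE //.
    - exact: measurableC.
    - exact/measurableC/measurable_rv_eq.
    - by move=> w /= Nwy Nw0; apply: Nwy; rewrite Nw0.
  by have := probability_setC P (measurableC mle); rewrite setCK nle_null sube0.
apply/eqP; rewrite eq_le measure_ge0 andbT -N0_null le_measure ?inE //.
- exact/measurableC/measurable_rv_eq.
- by move=> w /= Nwy Nw0; move: y_lt0; rewrite ltNge -Nw0 Nwy.
Qed.

Lemma distribution_lt_nat (n : nat) :
  distribution P N [set x | x < n%:R] = (cdfR P N (n%:R - 1))%:E.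
Proof.
transitivity (P [set w | N w <= n%:R - 1]); last first.
  exact: esym (EFin_pr P (measurable_rv_le N _)).
rewrite /distribution /pushforward; congr (P _); apply/seteqP.
by split => w /=; have [m ->] := N_nat w; rewrite natr_le_subr1 ltr_nat.
Qed.

Lemma distribution_ge_nat (n : nat) :
  distribution P N [set x | n%:R <= x] = (1 - cdfR P N (n%:R - 1))%:E.
Proof.
have -> : [set x | n%:R <= x] = ~` [set x : R | x < n%:R].
  by apply/seteqP; split => x /=; rewrite leNgt => /negP.
rewrite probability_setC; last exact: measurable_lt.
transitivity (1 - distribution P N [set x | x < n%:R]%R)%E; first by [].
by rewrite distribution_lt_nat EFinB.
Qed.

Lemma pmf_ostat_max (n : nat) :
  pmf_ostat P N 2 n = cdfR P N n%:R ^+ 2 - cdfR P N (n%:R - 1) ^+ 2.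
Proof.
rewrite /pmf_ostat /ostat2 /=.
have -> : [set z : R * R | Num.max z.1 z.2 = n%:R] =
    ([set x | x <= n%:R] `*` [set x | x <= n%:R]) `\` ([set x | x < n%:R] `*` [set x | x < n%:R]).
  by apply/seteqP; split => z /=; rewrite max_eq_iff.
rewrite pr_pair_square_setD; first last.
- by move=> x /= /ltW.
- exact: measurable_lt.
- exact: measurable_le.
by rewrite [distribution _ _ _]distribution_le distribution_lt_nat.
Qed.

Lemma pmf_ostat_min (n : nat) :
  pmf_ostat P N 1 n = (1 - cdfR P N (n%:R - 1)) ^+ 2 - (1 - cdfR P N n%:R) ^+ 2.
Proof.
rewrite /pmf_ostat /ostat2 /=.
have -> : [set z : R * R | Num.min z.1 z.2 = n%:R] =
    ([set x | n%:R <= x] `*` [set x | n%:R <= x]) `\` ([set x | n%:R < x] `*` [set x | n%:R < x]).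
  by apply/seteqP; split => z /=; rewrite min_eq_iff.
rewrite pr_pair_square_setD; first last.
- by move=> x /= /ltW.
- exact: measurable_gt.
- exact: measurable_ge.
by rewrite [distribution _ _ _]distribution_ge_nat distribution_gt.
Qed.

Lemma pr_eq_le_fgm (Y : {RV P >-> R}) (th : R) (n : nat) (r : R) :
  fgm_bivariate N Y th ->
  let a := cdfR P N n%:R in let b := cdfR P N (n%:R - 1) in
  pr ([set w | N w = n%:R] `&` [set w | Y w <= r]) =
  (a - b) * cdfR P Y r + th * (a * (1 - a) - b * (1 - b)) * (cdfR P Y r * (1 - cdfR P Y r)).
Proof.
move=> fgm a b; apply: (@addrI _ (pr ([set w | N w <= n%:R - 1] `&` [set w | Y w <= r]))).
rewrite -pr_le_nat_split; last exact: measurable_rv_le.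
by rewrite (fgm n%:R r) (fgm (n%:R - 1) r) /a /b; ring.
Qed.

Lemma integral_eq_fgm (Y : {RV P >-> R}) (th : R) (n : nat) :
  (forall w, 0 < Y w) -> P.-integrable setT (EFin \o Y) -> fgm_bivariate N Y th ->
  let a := cdfR P N n%:R in let b := cdfR P N (n%:R - 1) in
  fine (\int[P]_(w in [set w | N w = n%:R]) (Y w)%:E)%E =
  (a - b) * fine 'E_P[Y] - th * (a * (1 - a) - b * (1 - b)) * gini_half Y.
Proof.
move=> Y_gt0 Y_int fgm a b.
rewrite integral_set_ccdf; last 2 first.
- exact: measurable_rv_eq.
- by move=> w; exact/ltW.
transitivity (fine (\int[lebesgue_measure]_(r in `[0%R, +oo[)
    ((a - b) * (1 - cdfR P Y r) + (- (th * (a * (1 - a) - b * (1 - b)))) *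
     (cdfR P Y r * (1 - cdfR P Y r)))%:E)%E).
  congr fine; apply: eq_integral => r _.
  by rewrite (pr_eq_le_fgm n r fgm) -/(pmfN P N n) pmfN_cdfR /a /b; congr EFin; ring.
by rewrite integral_ccdf_gini //=; ring.
Qed.

End IntegerValued.

Theorem mainTheorem4 (R : realType) (dT : measure_display)
  (T : measurableType dT) (P : probability T R)
  (N : {RV P >-> R}) (X : nat -> {RV P >-> R})
  (theta : forall k : nat, {set 'I_k.+1} -> R) :
  (forall w, exists m : nat, N w = m%:R) ->
  (forall j w, 0 < X j w) ->
  (forall j (A : set R), measurable A ->
     distribution P (X j) A = distribution P (X 0%N) A) ->
  (forall k : nat, (1 <= k)%N -> (exists m : nat, 0 < pmfN P N m /\ (k <= m)%N) ->
     fgm_admissible (theta k) /\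
     forall (y : R) (x : 'I_k -> R),
       joint_cdf P N X y x =
       (fgm_copula (theta k)
          (fun i : 'I_k.+1 => if unlift ord0 i is Some i'
                              then cdfR P (X 0%N) (x i') else cdfR P N y))%:E) ->
  (forall k : nat, (1 <= k)%N -> (exists m : nat, 0 < pmfN P N m /\ (k <= m)%N) ->
     forall (s : 'S_k) (y : R) (x : 'I_k -> R),
       joint_cdf_perm P N X s y x = joint_cdf P N X y x) ->
  P.-integrable [set: T] (EFin \o X 0%N) ->
  forall n : nat, 0 < pmfN P N n ->
  let th01 := theta 1%N ([set ord0; ord_max])%SET in
  condexp_eq P (X 0%N) N n =
    \sum_(i0 < 2) \sum_(i1 < 2)
      ((1 + (-1) ^+ (i0 + i1) * th01) / 4
       * (pmf_ostat P N (1 + i0) n / pmfN P N n)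
       * mean_ostat P (X 0%N) (1 + i1))
  /\
  condexp_eq P (X 0%N) N n =
    fine ('E_P[X 0%N]) + th01 / 4
      * ((pmf_ostat P N 2 n - pmf_ostat P N 1 n) / pmfN P N n)
      * (mean_ostat P (X 0%N) 2 - mean_ostat P (X 0%N) 1).
Proof.
move=> N_nat X_gt0 _ fgm _ X_int n pmf_gt0 th01.
have pair : fgm_bivariate N (X 0%N) th01.
  have [[m [pm m1]]|degenerate] := pselect (exists m, 0 < pmfN P N m /\ (1 <= m)%N).
    exact: fgm_bivariate_joint_cdf (fgm 1%N isT (ex_intro _ m (conj pm m1))).2.
  apply/fgm_bivariate_trivial/pr_le_trivial_of_pmfN0 => // m m_gt0.
  apply/eqP; rewrite eq_le fine_ge0 ?measure_ge0 // andbT leNgt.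
  by apply/negP => pm; apply: degenerate; exists m.
have pmf_neq0 : pmfN P N n != 0 by rewrite lt0r_neq0.
rewrite !big_ord_recr !big_ord0 /= !add0r /condexp_eq.
rewrite (integral_eq_fgm N_nat n (X_gt0 0%N) X_int pair).
rewrite (mean_ostat_max (X_gt0 0%N) X_int) (mean_ostat_min (X_gt0 0%N) X_int).
rewrite (pmf_ostat_max N_nat) (pmf_ostat_min N_nat) (pmfN_cdfR N_nat) in pmf_neq0 *.
by split; field.
Qed.
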